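(* Let $q$ be a prime power, $c\in\mathbb{F}_q^*$ and $\delta\in\mathbb{F}_{q^3}$. Then $f(x)=g(x^q-x+\delta)+cx$ is a permutation polynomial of $\mathbb{F}_{q^3}$ if one of the following holds: (i) $g(x)=u(x)^{q^2}+u(x)^q+u(x)$ for some polynomial $u(x)\in\mathbb{F}_{q^3}[x]$; (ii) $g(x)=x^{i(q^2+q+1)}$ for some positive integer $i$.
   Context: A polynomial is a permutation polynomial of a finite field if it induces a bijection of that field. $\mathbb{F}_q$ is viewed as the subfield of $\mathbb{F}_{q^3}$. *)

From HB Require Import structures.
From mathcomp Require Import all_boot all_order all_algebra all_field.
Set Implicit Arguments. Unset Strict Implicit. Unset Printing Implicit Defensive.
Import GRing.Theory.
Local Open Scope ring_scope.

Definition permutation_poly (F : finFieldType) (f : {poly F}) : Prop :=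
  bijective (fun x : F => f.[x]).

Definition prime_power (q : nat) : Prop :=
  exists p k : nat, [/\ prime p, (0 < k)%N & q = (p ^ k)%N].

From HB Require Import structures.
From mathcomp Require Import all_boot all_order all_algebra all_field ring.
Set Implicit Arguments. Unset Strict Implicit. Unset Printing Implicit Defensive.
Import GRing.Theory.
Local Open Scope ring_scope.

(* Let L be a finite field and q a power of its characteristic,
   so that x |-> x^q is additive and F_q = {x | x^q = x} is a subfield.
   For f(x) = g(x^q - x + delta) + c x with c a nonzero element of F_q and g
   taking all its values in F_q, f is injective, hence bijective: if
   f(x) = f(y) then c (x - y) is a difference of two values of g, so lies in
   F_q, hence x - y lies in F_q; then x^q - x = y^q - y, the two g-terms
   agree and c x = c y.  When #|L| = q^3 (so x^(q^3) = x), both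
   the trace form u^(q^2) + u^q + u and any power of the norm x^(q^2+q+1)
   take values in F_q, which gives cases (i) and (ii) of the theorem. *)

Section FrobeniusPower.

Variables (L : finFieldType) (q : nat).
Hypothesis pnat_q : [pchar L].-nat q.

Lemma expqB (x y : L) : (x - y) ^+ q = x ^+ q - y ^+ q.
Proof. by rewrite exprDn_pchar // exprNn_pchar. Qed.

Lemma shift_eq_of_fixed_diff (x y : L) :
  (x - y) ^+ q = x - y -> x ^+ q - x = y ^+ q - y.
Proof.
move=> fixed_xy; apply/eqP; rewrite -subr_eq0.
have -> : x ^+ q - x - (y ^+ q - y) = (x - y) ^+ q - (x - y).
  by rewrite expqB; ring.
by rewrite fixed_xy subrr.
Qed.

Lemma permutation_shift_criterion (g : {poly L}) (c delta : L) :
  c != 0 -> c ^+ q = c -> (forall z, g.[z] ^+ q = g.[z]) ->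
  permutation_poly (g \Po ('X ^+ q - 'X + delta%:P) + c *: 'X).
Proof.
move=> c_neq0 c_fixed g_fixed; apply: injF_bij => x y /=.
rewrite !hornerE !horner_comp !hornerE => fxy.
have c_diff : c * (x - y) = g.[y ^+ q - y + delta] - g.[x ^+ q - x + delta].
  apply/eqP; rewrite -subr_eq0; apply/eqP.
  transitivity ((g.[x ^+ q - x + delta] + c * x) - (g.[y ^+ q - y + delta] + c * y)).
    by ring.
  by rewrite fxy subrr.
have diff_fixed : (x - y) ^+ q = x - y.
  apply: (mulfI c_neq0); rewrite -[in LHS]c_fixed -exprMn c_diff.
  by rewrite expqB !g_fixed.
move: fxy; rewrite (shift_eq_of_fixed_diff diff_fixed).
by move=> /addrI /(mulfI c_neq0).
Qed.

End FrobeniusPower.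

Section CubicExtension.

Variables (L : finFieldType) (q : nat).
Hypothesis pnat_q : [pchar L].-nat q.
Hypothesis card_L : #|L| = (q ^ 3)%N.

Lemma expq3 (x : L) : x ^+ (q ^ 3) = x.
Proof. by rewrite -card_L expf_card. Qed.

Lemma trace_fixed (a : L) :
  (a ^+ (q ^ 2) + a ^+ q + a) ^+ q = a ^+ (q ^ 2) + a ^+ q + a.
Proof.
rewrite !exprDn_pchar // -!exprM -!expnSr expq3.
by rewrite [RHS]addrC addrA.
Qed.

Lemma norm_power_fixed (x : L) (i : nat) :
  (x ^+ (i * (q ^ 2 + q + 1))) ^+ q = x ^+ (i * (q ^ 2 + q + 1)).
Proof.
rewrite mulnC !exprM exprAC; congr (_ ^+ i).
rewrite -exprM !mulnDl mul1n mulnn -!expnSr !exprD expq3.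
by rewrite expr1 -mulrA mulrC.
Qed.

End CubicExtension.

Lemma pchar_nat_of_card (L : finFieldType) (q : nat) :
  prime_power q -> #|L| = (q ^ 3)%N -> [pchar L].-nat q.
Proof.
move=> [p [k [p_prime _ ->]]] card_L.
have p_char : p \in [pchar L].
  by apply: (card_finPcharP (n := (k * 3)%N)) => //; rewrite card_L expnM.
by rewrite pnatX (eq_pnat _ (pcharf_eq p_char)) pnat_id.
Qed.

Theorem proposition5 (L : finFieldType) (q : nat)
  (hq : prime_power q) (hL : #|L| = (q ^ 3)%N)
  (c delta : L) (hc0 : c != 0) (hcq : c ^+ q = c)
  (g : {poly L}) :
  ((exists u : {poly L}, g = u ^+ (q ^ 2) + u ^+ q + u) \/
   (exists i : nat, (0 < i)%N /\ g = 'X ^+ (i * (q ^ 2 + q + 1)))) ->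
  permutation_poly (g \Po ('X ^+ q - 'X + delta%:P) + c *: 'X).
Proof.
move=> g_shape; have pnat_q := pchar_nat_of_card hq hL.
apply: (permutation_shift_criterion pnat_q _ hc0 hcq) => z.
case: g_shape => [[u ->] | [i [_ ->]]]; rewrite !hornerE.
- exact: (trace_fixed pnat_q hL).
- exact: (norm_power_fixed hL).
Qed.
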